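(* Let $f : \widehat{\mathbb{Z}} \to \widehat{\mathbb{Z}}$ be a congruence stable map. Then $f$ is profinite preperiodic.
   Context: $\mathbb{N} = \{1,2,\dots\}$, $\widehat{\mathbb{Z}} = \varprojlim_n \mathbb{Z}/n\mathbb{Z}$ (a complete metric space with its profinite topology); $s \equiv_n t$ means $s-t \in n\widehat{\mathbb{Z}}$; $\widehat{\cdot}:\mathbb{N}\to\widehat{\mathbb{Z}}$ is the natural embedding. For a continuous map $f:\widehat{\mathbb{Z}}\to\widehat{\mathbb{Z}}$, a map $P:\mathbb{N}\to\mathbb{N}$ is a period map of $f$ if $s \equiv_{P(n)} t$ implies $f(s) \equiv_n f(t)$ for all $s,t \in \widehat{\mathbb{Z}}$, $n \in \mathbb{N}$. A continuous $f$ is congruence stable if there exists a period map $P$ of $f$ such that for each $n \in \mathbb{N}$, $P^k(n) = P^{k+1}(n)$ for all sufficiently large $k$. A continuous map $f$ is profinite preperiodic if for every $x \in \widehat{\mathbb{Z}}$ the following holds: for every $s \in \widehat{\mathbb{Z}}$ and every sequence of positive integers $(n_i)$ with $n_i \to +\infty$ in $\mathbb{R}$ and $\widehat{n_i} \to s$ in $\widehat{\mathbb{Z}}$, the limit $\lim_{i\to\infty} f^{n_i}(x)$ exists in $\widehat{\mathbb{Z}}$ and depends only on $s$. (Equivalently, each map $n \mapsto f^n(x)$ extends continuously to the profinite completion $\widehat{\mathbb{N}} = \mathbb{N} \sqcup \widehat{\mathbb{Z}}$ of $(\mathbb{N},+)$.) *)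

From mathcomp Require Import all_boot.
Set Implicit Arguments. Unset Strict Implicit. Unset Printing Implicit Defensive.

(* The profinite integers  Zhat = lim_n Z/nZ, represented as compatible
   families of residues: zval x n in [0,n) for n >= 1 (the image of x in
   Z/nZ), with zval x n = zval x m mod m whenever m | n.  Index 0 is unused
   and normalized to 0 so that Leibniz equality is the right equality. *)
Record Zhat := MkZhat {
  zval : nat -> nat ;
  zval0 : zval 0 = 0 ;
  zval_lt : forall n, 0 < n -> zval n < n ;
  zval_compat : forall m n, 0 < m -> 0 < n -> m %| n -> zval n %% m = zval m
}.

(* s ==_n t  iff  s - t \in n Zhat, i.e. s and t have the same image in
   Z/nZ (n Zhat is the kernel of the projection Zhat -> Z/nZ). *)
Definition zcongr (n : nat) (s t : Zhat) : Prop := zval s n = zval t n.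

Definition nat_fam (n : nat) (k : nat) : nat := if k == 0 then 0 else n %% k.

Lemma nat_fam0 n : nat_fam n 0 = 0. Proof. by []. Qed.

Lemma nat_fam_lt n k : 0 < k -> nat_fam n k < k.
Proof. rewrite /nat_fam; case: k => // k _; exact: ltn_pmod. Qed.

Lemma nat_fam_compat n m k : 0 < m -> 0 < k -> m %| k -> nat_fam n k %% m = nat_fam n m.
Proof.
rewrite /nat_fam; case: m => // m; case: k => // k _ _ H /=.
exact: modn_dvdm.
Qed.

Definition zhat_of_nat (n : nat) : Zhat :=
  MkZhat (nat_fam0 n) (@nat_fam_lt n) (@nat_fam_compat n).

(* Continuity for the profinite topology (basic neighbourhoods of s are
   the cosets s + m Zhat, m >= 1). *)
Definition zcontinuous (f : Zhat -> Zhat) : Prop :=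
  forall (s : Zhat) (n : nat), 0 < n ->
    exists m, 0 < m /\ forall t : Zhat, zcongr m s t -> zcongr n (f s) (f t).

Definition period_map (f : Zhat -> Zhat) (P : nat -> nat) : Prop :=
  (forall n, 0 < n -> 0 < P n) /\
  (forall (n : nat) (s t : Zhat), 0 < n -> zcongr (P n) s t -> zcongr n (f s) (f t)).

Definition congruence_stable (f : Zhat -> Zhat) : Prop :=
  zcontinuous f /\
  exists P : nat -> nat, period_map f P /\
    forall n, 0 < n -> exists K, forall k, K <= k -> iter k P n = iter k.+1 P n.

Definition zconv (u : nat -> Zhat) (l : Zhat) : Prop :=
  forall k, 0 < k -> exists I, forall i, I <= i -> zcongr k (u i) l.

Definition profinite_preperiodic (f : Zhat -> Zhat) : Prop :=
  zcontinuous f /\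
  forall x : Zhat, exists L : Zhat -> Zhat,
    forall (s : Zhat) (n : nat -> nat),
      (forall i, 0 < n i) ->
      (forall M, exists I, forall i, I <= i -> M <= n i) ->
      zconv (fun i => zhat_of_nat (n i)) s ->
      zconv (fun i => iter (n i) f x) (L s).

(* For a level k, iterate the period map until it stabilises at m = P^K(k)
   with P m = m.  Then f preserves congruence mod m, so by pigeonhole the
   orbit of x is eventually periodic mod m, and pushing through f^K makes it
   eventually periodic mod k, say with preperiod T_k and period Q_k.  Hence
   for large n the residue of f^n(x) mod k only depends on n mod Q_k, i.e. on
   the image of n in Zhat; these residues are compatible in k and define the
   limit L(s). *)

From Stdlib Require Import ClassicalEpsilon.
From mathcomp Require Import all_boot zify.
Set Implicit Arguments. Unset Strict Implicit.

Lemma zval_zhat_of_nat n k : 0 < k -> zval (zhat_of_nat n) k = n %% k.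
Proof. by rewrite /= /nat_fam; case: k. Qed.

Definition orbit_periodic_mod (f : Zhat -> Zhat) (x : Zhat) (k T Q : nat) :=
  0 < Q /\ forall j, T <= j -> zcongr k (iter (j + Q) f x) (iter j f x).

Lemma orbit_periodic_mod_congr f x k T Q j1 j2 : orbit_periodic_mod f x k T Q ->
  T <= j1 -> T <= j2 -> j1 = j2 %[mod Q] -> zcongr k (iter j1 f x) (iter j2 f x).
Proof.
move=> [Q_gt0 periodic].
have shift c j : T <= j -> zcongr k (iter (j + c * Q) f x) (iter j f x).
  move=> Tj; elim: c => [|c IH]; first by rewrite mul0n addn0.
  by rewrite mulSnr addnA /zcongr periodic ?IH //; lia.
wlog le12 : j1 j2 / j1 <= j2.
  move=> W T1 T2 E; case: (leqP j1 j2) => [le12 | /ltnW le21]; first exact: W.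
  by symmetry; apply: W; rewrite // E.
move=> T1 _ /eqP; rewrite eq_sym eqn_mod_dvd // => /dvdnP [c def_c].
have -> : j2 = j1 + c * Q by lia.
by symmetry; apply: shift.
Qed.

Lemma orbit_collision f x m : 0 < m ->
  exists i j, i < j /\ zcongr m (iter i f x) (iter j f x).
Proof.
move=> m_gt0.
pose res (i : 'I_m.+1) : 'I_m := Ordinal (zval_lt (iter i f x) m_gt0).
have /injectivePn [i [j neq_ij /(congr1 val) /= eq_ij]] : ~~ injectiveb res.
  by apply/injectiveP => /leq_card; rewrite !card_ord ltnn.
case: (ltngtP i j) => [lt_ij | lt_ji | /val_inj eq_ij']; first by exists i, j.
- by exists j, i.
- by rewrite eq_ij' eqxx in neq_ij.
Qed.

Section PeriodMap.

Variables (f : Zhat -> Zhat) (P : nat -> nat).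
Hypothesis periodP : period_map f P.

Lemma iter_period_map_gt0 K k : 0 < k -> 0 < iter K P k.
Proof. by move=> k_gt0; elim: K => //= K; apply: periodP.1. Qed.

Lemma iter_period_map K k s t : 0 < k ->
  zcongr (iter K P k) s t -> zcongr k (iter K f s) (iter K f t).
Proof.
elim: K k => [//|K IH] k k_gt0; rewrite iterSr !iterS => congr_st.
by apply: periodP.2 => //; apply: IH => //; apply: periodP.1.
Qed.

Lemma iter_congr_fixed_level m r s t : 0 < m -> P m = m ->
  zcongr m s t -> zcongr m (iter r f s) (iter r f t).
Proof.
move=> m_gt0 Pm congr_st; elim: r => //= r IH.
by apply: periodP.2; rewrite ?Pm.
Qed.

Lemma orbit_periodic_fixed_level x m : 0 < m -> P m = m ->
  exists T Q, orbit_periodic_mod f x m T Q.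
Proof.
move=> m_gt0 Pm; have [i [j [lt_ij congr_ij]]] := orbit_collision f x m_gt0.
exists i, (j - i); split=> [|l le_il]; first by rewrite subn_gt0.
have [r ->] : exists r, l = r + i by exists (l - i); rewrite subnK.
have -> : r + i + (j - i) = r + j by lia.
by rewrite !iterD; symmetry; apply: iter_congr_fixed_level.
Qed.

Lemma orbit_periodic_iter_level x K k T Q : 0 < k ->
  orbit_periodic_mod f x (iter K P k) T Q -> orbit_periodic_mod f x k (T + K) Q.
Proof.
move=> k_gt0 [Q_gt0 periodic]; split=> // j le_j.
have [r ->] : exists r, j = K + (T + r) by exists (j - (T + K)); lia.
rewrite -addnA !(iterD K).
by apply: iter_period_map => //; apply: periodic; apply: leq_addr.
Qed.

End PeriodMap.

Lemma congruence_stable_orbit_periodic f x : congruence_stable f ->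
  exists T Q : nat -> nat, forall k, 0 < k -> orbit_periodic_mod f x k (T k) (Q k).
Proof.
case=> _ [P [periodP stableP]].
have periodic k : exists TQ : nat * nat, 0 < k -> orbit_periodic_mod f x k TQ.1 TQ.2.
  case: (posnP k) => [-> | k_gt0]; first by exists (0, 0).
  have [K stableK] := stableP k k_gt0.
  have fixedK : P (iter K P k) = iter K P k by rewrite -iterS -stableK.
  have [T [Q periodicKP]] := orbit_periodic_fixed_level periodP x
    (iter_period_map_gt0 periodP K k_gt0) fixedK.
  by exists (T + K, Q) => _; apply: orbit_periodic_iter_level periodicKP.
have [TQ TQ_periodic] := choice _ periodic.
by exists (fun k => (TQ k).1), (fun k => (TQ k).2).
Qed.

Definition index_above (T Q : nat) (s : Zhat) : nat := T * Q + zval s Q.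

Lemma index_above_ge T Q s : 0 < Q -> T <= index_above T Q s.
Proof. by move=> Q_gt0; rewrite /index_above; nia. Qed.

Lemma index_above_mod T Q Q' s : 0 < Q' -> 0 < Q -> Q' %| Q ->
  index_above T Q s %% Q' = zval s Q'.
Proof.
move=> Q'_gt0 Q_gt0 dvd_Q'Q.
by rewrite /index_above -modnDml (eqP (dvdn_mull _ dvd_Q'Q)) add0n zval_compat.
Qed.

Section OrbitLimit.

Variables (f : Zhat -> Zhat) (x : Zhat) (T Q : nat -> nat).
Hypothesis periodic : forall k, 0 < k -> orbit_periodic_mod f x k (T k) (Q k).

Definition orbit_residue (s : Zhat) (k : nat) : nat :=
  zval (iter (index_above (T k) (Q k) s) f x) k.

Lemma orbit_residueE s k j : 0 < k -> T k <= j -> j %% Q k = zval s (Q k) ->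
  zval (iter j f x) k = orbit_residue s k.
Proof.
move=> k_gt0 le_j mod_j; have Q_gt0 := (periodic k_gt0).1.
apply: orbit_periodic_mod_congr (periodic k_gt0) le_j (index_above_ge _ _ Q_gt0) _.
by rewrite mod_j index_above_mod.
Qed.

Lemma orbit_residue_compat s m n : 0 < m -> 0 < n -> m %| n ->
  orbit_residue s n %% m = orbit_residue s m.
Proof.
move=> m_gt0 n_gt0 dvd_mn.
have Qm_gt0 := (periodic m_gt0).1; have Qn_gt0 := (periodic n_gt0).1.
have QQ_gt0 : 0 < Q n * Q m by rewrite muln_gt0 Qm_gt0 Qn_gt0.
pose J := index_above (T n + T m) (Q n * Q m) s.
have [le_nJ le_mJ] : T n <= J /\ T m <= J.
  by have := index_above_ge (T n + T m) s QQ_gt0; lia.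
have JQn : J %% Q n = zval s (Q n) by rewrite index_above_mod ?dvdn_mulr.
have JQm : J %% Q m = zval s (Q m) by rewrite index_above_mod ?dvdn_mull.
rewrite -(orbit_residueE n_gt0 le_nJ JQn) -(orbit_residueE m_gt0 le_mJ JQm).
exact: zval_compat.
Qed.

Definition orbit_limit (s : Zhat) : Zhat :=
  @MkZhat (orbit_residue s) (zval0 _) (fun k => @zval_lt _ k) (@orbit_residue_compat s).

Lemma orbit_limit_congr s k j : 0 < k -> T k <= j -> j %% Q k = zval s (Q k) ->
  zcongr k (iter j f x) (orbit_limit s).
Proof. exact: orbit_residueE. Qed.

End OrbitLimit.

Theorem theorem3p7 (f : Zhat -> Zhat) :
  congruence_stable f -> profinite_preperiodic f.
Proof.
move=> stable_f; split; first exact: stable_f.1.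
move=> x; have [T [Q periodic]] := congruence_stable_orbit_periodic x stable_f.
exists (orbit_limit periodic) => s n _ unbounded conv k k_gt0.
have Q_gt0 := (periodic k k_gt0).1.
have [I1 residue_n] := conv (Q k) Q_gt0.
have [I2 large_n] := unbounded (T k).
exists (maxn I1 I2) => i; rewrite geq_max => /andP [le_I1 le_I2].
apply: orbit_limit_congr; rewrite ?large_n //.
by rewrite -(zval_zhat_of_nat (n i) Q_gt0); apply: residue_n.
Qed.
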